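(* Let $V$ be a diagonal $l$-qubit unitary in the third level $\mathcal{C}^{(3)}$ of the Clifford hierarchy and let $|V\rangle=V|+\rangle^{\otimes l}$. Let $S_V=\langle VX_iV^{\dagger}: i\in[l]\rangle$ be the group generated by the operators $VX_iV^\dagger$, and define the twirling map $$\mathcal{T}_V(\rho)=\frac{1}{|S_V|}\sum_{s\in S_V}s\rho s^{\dagger}.$$ Then for any quantum channel $\mathcal{E}$ on $l$ qubits, $$\mathcal{T}_V\circ\mathcal{E}(|V\rangle\langle V|)=\sum_{x\in\mathbb{F}_2^l}p_x\,Z_x|V\rangle\langle V|Z_x^{\dagger}$$ for some probability distribution $\{p_x\}_{x\in\mathbb{F}_2^l}$, where $Z_x=\bigotimes_{i=1}^l Z_i^{x_i}$.
   Context: The $l$-qubit Pauli group $\mathcal{P}_l$ consists of tensor products of $I,X,Y,Z$ times a phase in $\{\pm1,\pm i\}$. The Clifford hierarchy: $\mathcal{C}^{(1)}=\mathcal{P}_l$ and $\mathcal{C}^{(k)}=\{W\in U(2^l): WPW^\dagger\in\mathcal{C}^{(k-1)}\ \forall P\in\mathcal{P}_l\}$ for $k\ge2$. $X_i,Z_i$ denote the Pauli $X,Z$ on qubit $i$, and $|+\rangle=(|0\rangle+|1\rangle)/\sqrt2$. *)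

From HB Require Import structures.
From mathcomp Require Import all_boot all_order all_algebra.
From mathcomp Require Import reals.
From mathcomp.real_closed Require Import complex mxtens.
Set Implicit Arguments. Unset Strict Implicit. Unset Printing Implicit Defensive.
Import Order.TTheory GRing.Theory Num.Theory.
Local Open Scope ring_scope.

Section Quantum.
Variable R : realType.
Local Notation C := (R[i]).

Definition adj {m n : nat} (A : 'M[C]_(m, n)) : 'M[C]_(n, m) :=
  (map_mx Num.conj A)^T.

Definition unitary {n : nat} (U : 'M[C]_n) : Prop := adj U *m U = 1%:M.

Definition psd {n : nat} (A : 'M[C]_n) : Prop :=
  adj A = A /\ forall v : 'cV[C]_n, 0 <= (adj v *m A *m v) ord0 ord0.

(* id_m (x) E, acting on 'M_(m * n) = 'M_m (x) 'M_n *)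
Definition ampl (m n : nat) (E : 'M[C]_n -> 'M[C]_n) (X : 'M[C]_(m * n))
  : 'M[C]_(m * n) :=
  \sum_(a < m) \sum_(b < m)
     (delta_mx a b : 'M[C]_m) *t
       E (\matrix_(i < n, j < n) X (mxtens_index (a, i)) (mxtens_index (b, j))).

Definition quantum_channel (n : nat) (E : 'M[C]_n -> 'M[C]_n) : Prop :=
  [/\ forall (c : C) (A B : 'M[C]_n), E (c *: A + B) = c *: E A + E B,
      forall (m : nat) (X : 'M[C]_(m * n)), psd X -> psd (ampl E X)
    & forall A : 'M[C]_n, \tr (E A) = \tr A].

(* ---- l-qubit conventions: basis states 'I_(2^l), qubit k <-> bit k ---- *)
Definition bit (l : nat) (k : 'I_l) (i : 'I_(2 ^ l)) : 'I_2 :=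
  inord (odd (i %/ 2 ^ k)).

(* single-qubit Paulis, indexed 0 = I, 1 = X, 2 = Y, 3 = Z *)
Definition sigma (c : 'I_4) : 'M[C]_2 :=
  match val c with
  | 0 => 1%:M
  | 1 => \matrix_(i < 2, j < 2) (i != j)%:R
  | 2 => \matrix_(i < 2, j < 2)
           (if i == j then 0 else if val i == 0%N then - 'i else 'i)
  | _ => \matrix_(i < 2, j < 2) ((i == j)%:R * (-1) ^+ (val i))
  end.

Definition pauli_string (l : nat) (p : {ffun 'I_l -> 'I_4}) : 'M[C]_(2 ^ l) :=
  \matrix_(i, j) \prod_(k < l) sigma (p k) (bit k i) (bit k j).

Definition pauli (l : nat) (P : 'M[C]_(2 ^ l)) : Prop :=
  exists (c : C) (p : {ffun 'I_l -> 'I_4}),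
    (c \in [:: 1; -1; 'i; - 'i]) /\ P = c *: pauli_string p.

(* clifford k W  <->  W \in C^(k.+1) *)
Fixpoint clifford (l : nat) (k : nat) (W : 'M[C]_(2 ^ l)) : Prop :=
  match k with
  | 0 => pauli W
  | k'.+1 => unitary W /\
      forall P : 'M[C]_(2 ^ l), pauli P -> clifford k' (W *m P *m adj W)
  end.

Definition clifford_level (l k : nat) (W : 'M[C]_(2 ^ l)) : Prop :=
  clifford k.-1 W.

Definition Xq (l : nat) (k : 'I_l) : 'M[C]_(2 ^ l) :=
  pauli_string [ffun m => if m == k then (1 : 'I_4) else 0].
Definition Zq (l : nat) (k : 'I_l) : 'M[C]_(2 ^ l) :=
  pauli_string [ffun m => if m == k then (3 : 'I_4) else 0].
Definition Zx (l : nat) (x : {ffun 'I_l -> bool}) : 'M[C]_(2 ^ l) :=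
  pauli_string [ffun m => if x m then (3 : 'I_4) else 0].

Definition plus_state (l : nat) : 'cV[C]_(2 ^ l) :=
  const_mx (real_complex R (Num.sqrt ((2 ^ l)%:R : R))^-1).

Definition ket_V (l : nat) (V : 'M[C]_(2 ^ l)) : 'cV[C]_(2 ^ l) :=
  V *m plus_state l.
Definition proj_V (l : nat) (V : 'M[C]_(2 ^ l)) : 'M[C]_(2 ^ l) :=
  ket_V V *m adj (ket_V V).

Inductive gen_group (n : nat) (G : 'M[C]_n -> Prop) : 'M[C]_n -> Prop :=
| gen_one : gen_group G 1%:M
| gen_mul g M : G g -> gen_group G M -> gen_group G (g *m M)
| gen_inv g M : G g -> gen_group G M -> gen_group G (invmx g *m M).

Definition S_V (l : nat) (V : 'M[C]_(2 ^ l)) : 'M[C]_(2 ^ l) -> Prop :=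
  gen_group (fun g => exists k : 'I_l, g = V *m Xq k *m adj V).

Definition enumerates (n : nat) (S : 'M[C]_n -> Prop) (s : seq 'M[C]_n) : Prop :=
  uniq s /\ forall M, M \in s <-> S M.

Definition twirl (n : nat) (s : seq 'M[C]_n) (rho : 'M[C]_n) : 'M[C]_n :=
  (size s)%:R^-1 *: \sum_(M <- s) (M *m rho *m adj M).

End Quantum.

Arguments Zx {R l} x.
Arguments Zq {R l} k.
Arguments Xq {R l} k.
Arguments plus_state {R} l.
Arguments sigma {R} c.

From HB Require Import structures.
From mathcomp Require Import all_boot all_order all_algebra.
From mathcomp Require Import reals ring.
From mathcomp.real_closed Require Import complex mxtens.
Set Implicit Arguments. Unset Strict Implicit. Unset Printing Implicit Defensive.
Import Order.TTheory GRing.Theory Num.Theory.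
Local Open Scope ring_scope.

(* S_V is the conjugate V X V^dagger of the bit-flip group X = {X_a : a in F_2^l},
   and only the unitarity of V (which the third level of the hierarchy provides)
   and its diagonality are used.  Twirling over X is dephasing in the X basis
   |x~> = Z_x |+>^{(x)l}: by orthogonality of the characters a |-> (-1)^(x.a) of
   F_2^l, 2^-l sum_a X_a B X_a = sum_x <x~|B|x~> |x~><x~|.  Conjugating by V,
   which commutes with the diagonal Z_x, the twirl of rho is
   sum_x <x~|V^dagger rho V|x~> Z_x |V><V| Z_x; the weights are nonnegative because
   quantum channels are positive maps, and they sum to tr rho = 1. *)

Lemma binary_expansion (l i : nat) :
  (i < 2 ^ l)%N -> i = (\sum_(k < l) odd (i %/ 2 ^ k) * 2 ^ k)%N.
Proof.
elim: l i => [|l IHl] i lt_i; first by rewrite big_ord0; case: i lt_i.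
rewrite big_ord_recl /= divn1 muln1 {1}(divn_eq i 2) modn2 addnC; congr (_ + _)%N.
have lt_half : (i %/ 2 < 2 ^ l)%N by rewrite ltn_divLR // -expnSr.
rewrite {1}(IHl _ lt_half) big_distrl /=; apply: eq_bigr => k _.
by rewrite /bump /= add1n expnS divnMA -mulnA (mulnC 2).
Qed.

Lemma prod_natr_bool (S : comPzSemiRingType) (I : finType) (P : pred I) :
  \prod_i (P i)%:R = [forall i, P i]%:R :> S.
Proof.
have [allP | notall] := boolP [forall i, P i].
  by rewrite big1 // => i _; rewrite (forallP allP).
have /existsP[i /negbTE Pi] : [exists i, ~~ P i] by rewrite -negb_forall.
by rewrite (bigD1 i) //= Pi mul0r.
Qed.

Lemma inord_bool_eq (b b' : bool) : (inord b == inord b' :> 'I_2) = (b == b').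
Proof. by rewrite -val_eqE /= !inordK //; case: b; case: b'. Qed.

Section Channels.
Variable R : realType.
Local Notation C := R[i].

Lemma adjE m p (A : 'M[C]_(m, p)) i j : adj A i j = (A j i)^*.
Proof. by rewrite !mxE. Qed.

Lemma adjM m p q (A : 'M[C]_(m, p)) (B : 'M[C]_(p, q)) :
  adj (A *m B) = adj B *m adj A.
Proof. by rewrite /adj map_mxM trmx_mul. Qed.

Lemma adjK m p (A : 'M[C]_(m, p)) : adj (adj A) = A.
Proof. by apply/matrixP => i j; rewrite !mxE conjCK. Qed.

Lemma mulmx_rank1 m p (M : 'M[C]_(m, p)) (u : 'cV[C]_p) :
  M *m (u *m adj u) *m adj M = (M *m u) *m adj (M *m u).
Proof. by rewrite adjM !mulmxA. Qed.

Lemma psd_rank1 m (u : 'cV[C]_m) : psd (u *m adj u).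
Proof.
split=> [|v]; first by rewrite adjM adjK.
have -> : adj v *m (u *m adj u) *m v = (adj v *m u) *m adj (adj v *m u).
  by rewrite adjM adjK !mulmxA.
by rewrite mxE big_ord1 adjE mul_conjC_ge0.
Qed.

Lemma psd_castmx m m' (e : m = m') (A : 'M[C]_m) : psd (castmx (e, e) A) <-> psd A.
Proof. by case: m' / e; rewrite castmx_id. Qed.

Lemma ampl_tens1mx m (E : 'M[C]_m -> 'M[C]_m) (A : 'M[C]_m) :
  ampl E ((1 : 'M_1) *t A) = 1 *t E A.
Proof.
rewrite /ampl !big_ord1; congr (_ *t E _).
  by apply/matrixP => i j; rewrite !ord1 !mxE.
by apply/matrixP => i j; rewrite !mxE !mxtens_indexK mul1r.
Qed.

Lemma channel_psd m (E : 'M[C]_m -> 'M[C]_m) (A : 'M[C]_m) :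
  quantum_channel E -> psd A -> psd (E A).
Proof.
case=> _ cpE _ psdA; have := cpE 1%N (1 *t A).
by rewrite ampl_tens1mx !tens_scalar1mx !psd_castmx; apply.
Qed.

End Channels.

Section Qubits.
Variables (R : realType) (l : nat).
Local Notation C := R[i].
Local Notation n := (2 ^ l)%N.
Local Notation BV := {ffun 'I_l -> bool}.

Definition bits (i : 'I_n) : BV := [ffun k : 'I_l => odd (i %/ 2 ^ k)].

Lemma bits_inj : injective bits.
Proof.
move=> i j /ffunP eq_ij; apply: val_inj.
rewrite /= (binary_expansion (ltn_ord i)) (binary_expansion (ltn_ord j)).
by apply: eq_bigr => k _; move: (eq_ij k); rewrite !ffunE => ->.
Qed.

Definition unbits (a : BV) : 'I_n :=
  odflt (Ordinal (expn_gt0 2 l)) [pick i | bits i == a].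

Lemma unbitsK : cancel unbits bits.
Proof.
have bits_bij : bijective bits.
  by apply: (inj_card_bij bits_inj); rewrite card_ffun card_bool !card_ord.
move=> a; rewrite /unbits; case: pickP => [i /eqP // | no_i].
by have [inv _ invK] := bits_bij; move: (no_i (inv a)); rewrite invK eqxx.
Qed.

Lemma bitsK : cancel bits unbits.
Proof. by move=> i; apply: bits_inj; rewrite unbitsK. Qed.

Lemma sum_bits (F : BV -> C) : \sum_a F a = \sum_i F (bits i).
Proof.
by rewrite (reindex bits) //; exists unbits => a _; [apply: bitsK | apply: unbitsK].
Qed.

Lemma bitE (k : 'I_l) (i : 'I_n) : bit k i = inord (bits i k).
Proof. by rewrite /bit ffunE. Qed.

Lemma bvN (a : BV) : - a = a.
Proof. by apply/ffunP => k; rewrite !ffunE. Qed.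

Lemma bv_addrr (a : BV) : a + a = 0.
Proof. by rewrite -{2}[a]bvN subrr. Qed.

Lemma bv_addrK (a b : BV) : a + b + b = a.
Proof. by rewrite -addrA bv_addrr addr0. Qed.

Lemma bv_addKr (a b : BV) : a + (a + b) = b.
Proof. by rewrite addrA bv_addrr add0r. Qed.

Lemma sigma0E (b b' : bool) : sigma 0 (inord b) (inord b') = (b == b')%:R :> C.
Proof. by rewrite /sigma /= mxE inord_bool_eq. Qed.

Lemma sigma1E (b b' : bool) : sigma 1 (inord b) (inord b') = (b != b')%:R :> C.
Proof. by rewrite /sigma /= mxE inord_bool_eq. Qed.

Lemma sigma3E (b b' : bool) :
  sigma 3 (inord b) (inord b') = (b == b')%:R * (-1) ^+ b :> C.
Proof. by rewrite /sigma /= mxE inord_bool_eq inordK //; case: b. Qed.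

Definition walsh (x u : BV) : C := \prod_k (-1) ^+ (x k && u k).

Lemma walshD (x u v : BV) : walsh x (u + v) = walsh x u * walsh x v.
Proof.
rewrite -big_split; apply: eq_bigr => k _ /=.
by rewrite ffunE andb_addr signr_addb.
Qed.

Lemma walsh0 (x : BV) : walsh x 0 = 1.
Proof. by apply: big1 => k _; rewrite ffunE andbF. Qed.

Lemma conj_walsh (x u : BV) : (walsh x u)^* = walsh x u.
Proof. by rewrite rmorph_prod; apply: eq_bigr => k _; rewrite rmorph_sign. Qed.

Lemma sum_walsh (u : BV) : \sum_x walsh x u = (u == 0)%:R * n%:R.
Proof.
rewrite /walsh -(bigA_distr_bigA (fun k b => (-1) ^+ (b && u k) : C)) /=.
under eq_bigr => k _ do rewrite big_bool /= expr0.
have [-> | nz_u] := eqVneq u 0.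
  under eq_bigr => k _ do rewrite ffunE /=.
  by rewrite prodr_const card_ord mul1r natrX.
have [k u_k] : exists k, u k.
  apply/existsP; apply: contraNT nz_u => /existsPn u0.
  by apply/eqP/ffunP => k; rewrite ffunE; apply/negbTE/u0.
by rewrite (bigD1 k) //= u_k expr1 addNr !mul0r.
Qed.

Lemma Zx_diag (x : BV) : Zx x = diag_mx (\row_i walsh x (bits i)).
Proof.
apply/matrixP => i j; rewrite !mxE.
transitivity (\prod_k ((bits i k == bits j k)%:R * (-1) ^+ (x k && bits i k)) : C).
  apply: eq_bigr => k _; rewrite ffunE !bitE.
  by case: (x k); rewrite ?sigma3E ?sigma0E ?mulr1.
rewrite big_split /= prod_natr_bool mulr_natl; congr (_ *+ nat_of_bool _).
by apply/forallP/eqP => [eq_ij | -> //]; apply/bits_inj/ffunP => k; apply/eqP.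
Qed.

Definition unitbv (k : 'I_l) : BV := [ffun m => m == k].

Lemma sum_unitbv (a : BV) : \sum_(k | a k) unitbv k = a.
Proof.
apply/ffunP => m; rewrite sum_ffunE.
have [a_m | /negbTE a_m] := boolP (a m).
  rewrite (bigD1 m) //= big1 ?addr0 ?ffunE ?eqxx // => k /andP[_ ne_km].
  by rewrite ffunE eq_sym (negbTE ne_km).
by rewrite big1 // => k a_k; rewrite ffunE; apply: contraFF a_m => /eqP->.
Qed.

Definition Xa (a : BV) : 'M[C]_n := \matrix_(i, j) (bits j == bits i + a)%:R.

Lemma Xq_unitbv (k : 'I_l) : Xq k = Xa (unitbv k).
Proof.
apply/matrixP => i j; rewrite !mxE.
transitivity (\prod_m ((bits j m == bits i m + (m == k)))%:R : C).
  apply: eq_bigr => m _; rewrite ffunE !bitE.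
  case: (m == k); rewrite ?sigma1E ?sigma0E;
    by case: (bits i m); case: (bits j m).
rewrite prod_natr_bool; congr (nat_of_bool _)%:R.
apply/forallP/eqP => [eq_ji | -> m]; last by rewrite !ffunE.
by apply/ffunP => m; rewrite [RHS]ffunE [unitbv k m]ffunE; apply/eqP.
Qed.

Lemma mul_Xa_mx p (a : BV) (M : 'M[C]_(n, p)) i j :
  (Xa a *m M) i j = M (unbits (bits i + a)) j.
Proof.
rewrite mxE (bigD1 (unbits (bits i + a))) //= mxE unbitsK eqxx mul1r.
rewrite big1 ?addr0 // => k; rewrite mxE -(inj_eq bits_inj) unbitsK => /negbTE->.
by rewrite mul0r.
Qed.

Lemma mul_mx_Xa p (a : BV) (M : 'M[C]_(p, n)) i j :
  (M *m Xa a) i j = M i (unbits (bits j + a)).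
Proof.
have bitsE k : (bits j == bits k + a) = (k == unbits (bits j + a)).
  by rewrite -(inj_eq bits_inj) unbitsK -(inj_eq (addIr a)) bv_addrK eq_sym.
rewrite mxE (bigD1 (unbits (bits j + a))) //= mxE bitsE eqxx mulr1.
by rewrite big1 ?addr0 // => k; rewrite mxE bitsE => /negbTE->; rewrite mulr0.
Qed.

Lemma mulmx_Xa (a b : BV) : Xa a *m Xa b = Xa (a + b).
Proof. by apply/matrixP => i j; rewrite mul_Xa_mx !mxE unbitsK addrA. Qed.

Lemma Xa0 : Xa 0 = 1%:M.
Proof. by apply/matrixP => i j; rewrite !mxE addr0 (inj_eq bits_inj) eq_sym. Qed.

Lemma adj_Xa (a : BV) : adj (Xa a) = Xa a.
Proof.
apply/matrixP => i j; rewrite !mxE conjC_nat.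
by rewrite -(inj_eq (addIr a)) bv_addrK eq_sym.
Qed.

Lemma Xa_inj : injective Xa.
Proof.
move=> a b /matrixP /(_ (unbits 0) (unbits a)); rewrite !mxE !unbitsK !add0r eqxx.
by case: eqP => // _ /eqP; rewrite oner_eq0.
Qed.

Lemma Zx_comm_diag (x : BV) (V : 'M[C]_n) :
  is_diag_mx V -> Zx x *m V = V *m Zx x.
Proof. by case/diag_mxP => d ->; rewrite Zx_diag diag_mxC. Qed.

Local Notation amp := (real_complex R (Num.sqrt (n%:R : R))^-1).

Lemma conj_amp : amp^* = amp.
Proof. by apply/conj_Creal/complex_realP; eexists. Qed.

Lemma amp_mul : amp * amp = n%:R^-1.
Proof.
rewrite -rmorphM /= -expr2 exprVn sqr_sqrtr ?ler0n //.
by rewrite fmorphV /= rmorph_nat.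
Qed.

Lemma natr_pow2_neq0 : n%:R != 0 :> C.
Proof. by rewrite pnatr_eq0 expn_eq0. Qed.

Definition xbasis (x : BV) : 'cV[C]_n := Zx x *m plus_state l.

Lemma xbasisE (x : BV) i : xbasis x i 0 = walsh x (bits i) * amp.
Proof. by rewrite /xbasis Zx_diag mul_diag_mx !mxE. Qed.

Lemma xbasis_quadE (x : BV) (B : 'M[C]_n) :
  (adj (xbasis x) *m B *m xbasis x) 0 0 =
  amp * amp * \sum_k \sum_m walsh x (bits k + bits m) * B k m.
Proof.
rewrite mxE; under eq_bigr => m _ do rewrite mxE mulr_suml.
rewrite exchange_big mulr_sumr; apply: eq_bigr => k _ /=.
rewrite mulr_sumr; apply: eq_bigr => m _.
by rewrite adjE !xbasisE rmorphM /= conj_walsh conj_amp walshD; ring.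
Qed.

Lemma sum_walsh_sift (u : BV) (F : 'I_n -> C) :
  \sum_m (\sum_x walsh x (u + bits m)) * F m = n%:R * F (unbits u).
Proof.
under eq_bigr => m _ do rewrite sum_walsh addr_eq0 bvN.
rewrite (bigD1 (unbits u)) //= unbitsK eqxx mul1r big1 ?addr0 // => m ne_m.
suff -> : (u == bits m) = false by rewrite !mul0r.
by apply: contraNF ne_m => /eqP->; rewrite bitsK.
Qed.

Lemma sum_walsh_quad (u : BV) (B : 'M[C]_n) :
  \sum_x \sum_k \sum_m walsh x (u + bits k + bits m) * B k m =
  n%:R * \sum_k B k (unbits (u + bits k)).
Proof.
rewrite exchange_big mulr_sumr; apply: eq_bigr => k _ /=.
by rewrite exchange_big /=; under eq_bigr do rewrite -mulr_suml; rewrite sum_walsh_sift.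
Qed.

Lemma sum_walsh_xbasis_quad (u : BV) (B : 'M[C]_n) :
  \sum_x walsh x u * (adj (xbasis x) *m B *m xbasis x) 0 0 =
  \sum_k B k (unbits (u + bits k)).
Proof.
transitivity (amp * amp * \sum_x \sum_k \sum_m walsh x (u + bits k + bits m) * B k m).
  rewrite mulr_sumr; apply: eq_bigr => x _; rewrite xbasis_quadE mulrCA; congr (_ * _).
  rewrite mulr_sumr; apply: eq_bigr => k _; rewrite mulr_sumr; apply: eq_bigr => m _.
  by rewrite mulrA -walshD addrA.
by rewrite sum_walsh_quad mulrA amp_mul mulVf ?mul1r ?natr_pow2_neq0.
Qed.

Lemma X_twirlE (B : 'M[C]_n) :
  n%:R^-1 *: \sum_a Xa a *m B *m Xa a =
  \sum_x (adj (xbasis x) *m B *m xbasis x) 0 0 *: (xbasis x *m adj (xbasis x)).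
Proof.
apply/matrixP => i j; rewrite mxE !summxE.
transitivity (amp * amp * \sum_k B k (unbits (bits i + bits j + bits k))).
  rewrite amp_mul; congr (_ * _).
  under eq_bigr do rewrite mul_mx_Xa mul_Xa_mx.
  rewrite (reindex_inj (addrI (bits i))) sum_bits /=; apply: eq_bigr => k _.
  by rewrite bv_addKr bitsK addrA (addrC (bits j)).
rewrite -sum_walsh_xbasis_quad mulr_sumr; apply: eq_bigr => x _.
set q := (adj (xbasis x) *m B *m xbasis x) 0 0.
by rewrite !mxE big_ord1 adjE !xbasisE rmorphM /= conj_walsh conj_amp walshD; ring.
Qed.

Section ConjugatedTranslations.
Variable V : 'M[C]_n.
Hypothesis unitaryV : unitary V.

Definition VXa (a : BV) : 'M[C]_n := V *m Xa a *m adj V.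

Lemma mulmx_VXa (a b : BV) : VXa a *m VXa b = VXa (a + b).
Proof.
by rewrite /VXa -!mulmxA (mulmxA (adj V)) unitaryV mul1mx (mulmxA (Xa a)) mulmx_Xa.
Qed.

Lemma VXa0 : VXa 0 = 1%:M.
Proof. by rewrite /VXa Xa0 mulmx1; apply: mulmx1C. Qed.

Lemma VXa_inj : injective VXa.
Proof.
have VXaK a : adj V *m VXa a *m V = Xa a.
  by rewrite /VXa !mulmxA unitaryV mul1mx -mulmxA unitaryV mulmx1.
by move=> a b eq_ab; apply: Xa_inj; rewrite -VXaK eq_ab VXaK.
Qed.

Lemma invmx_VXa (a : BV) : invmx (VXa a) = VXa a.
Proof.
have VXa2 : VXa a *m VXa a = 1%:M by rewrite mulmx_VXa bv_addrr VXa0.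
have [unitVXa _] := mulmx1_unit VXa2.
by rewrite -[invmx _]mulmx1 -VXa2 mulmxA mulVmx // mul1mx.
Qed.

Lemma S_VE (M : 'M[C]_n) : S_V V M <-> exists a, M = VXa a.
Proof.
split.
  elim=> [|_ N [k ->] _ [a ->] | _ N [k ->] _ [a ->]]; first by exists 0; rewrite VXa0.
    by exists (unitbv k + a); rewrite Xq_unitbv -/(VXa _) mulmx_VXa.
  by exists (unitbv k + a); rewrite Xq_unitbv -/(VXa _) invmx_VXa mulmx_VXa.
case=> a ->; rewrite -(sum_unitbv a).
elim/big_rec: _ => [|k b _ S_b]; first by rewrite VXa0; apply: gen_one.
by rewrite -mulmx_VXa; apply: gen_mul S_b; exists k; rewrite Xq_unitbv -/(VXa _).
Qed.

Lemma S_V_enum : enumerates (S_V V) [seq VXa a | a : BV].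
Proof.
split; first by rewrite map_inj_uniq ?enum_uniq //; apply: VXa_inj.
move=> M; rewrite S_VE; split=> [/mapP[a _ ->] | [a ->]]; first by exists a.
by apply: map_f; rewrite mem_enum.
Qed.

Lemma adj_VXa (a : BV) : adj (VXa a) = VXa a.
Proof. by rewrite /VXa !adjM adjK adj_Xa mulmxA. Qed.

Lemma twirl_S_V (s : seq 'M[C]_n) (A : 'M[C]_n) : enumerates (S_V V) s ->
  twirl s A = V *m (n%:R^-1 *: \sum_a Xa a *m (adj V *m A *m V) *m Xa a) *m adj V.
Proof.
case=> uniq_s mem_s; have [uniq_VXa mem_VXa] := S_V_enum.
have perm_s : perm_eq s [seq VXa a | a : BV].
  by apply: uniq_perm => // M; apply/idP/idP => [/mem_s/mem_VXa | /mem_VXa/mem_s].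
rewrite /twirl (perm_big _ perm_s) (perm_size perm_s) size_map -cardE.
rewrite card_ffun card_bool card_ord big_map big_enum /= -scalemxAr -scalemxAl.
rewrite mulmx_sumr mulmx_suml; congr (_ *: _); apply: eq_bigr => a _.
by rewrite adj_VXa /VXa !mulmxA.
Qed.

Lemma sum_Vxbasis_quad (A : 'M[C]_n) :
  \sum_x (adj (V *m xbasis x) *m A *m (V *m xbasis x)) 0 0 = \tr A.
Proof.
transitivity (\sum_x walsh x 0 * (adj (xbasis x) *m (adj V *m A *m V) *m xbasis x) 0 0).
  by apply: eq_bigr => x _; rewrite walsh0 mul1r !adjM !mulmxA.
rewrite sum_walsh_xbasis_quad; under eq_bigr do rewrite add0r bitsK.
by rewrite -/(\tr _) mxtrace_mulC mulmxA (mulmx1C unitaryV) mul1mx.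
Qed.

Lemma tr_proj_V : \tr (proj_V V) = 1.
Proof.
rewrite /proj_V /ket_V mxtrace_mulC trace_mx11 adjM -mulmxA (mulmxA (adj V)).
rewrite unitaryV mul1mx mxE; under eq_bigr do rewrite adjE /plus_state !mxE conj_amp.
by rewrite sumr_const card_ord amp_mul -[_^-1 *+ n]mulr_natl mulfV ?natr_pow2_neq0.
Qed.

Hypothesis diagV : is_diag_mx V.

Lemma twirl_S_V_diag (s : seq 'M[C]_n) (A : 'M[C]_n) : enumerates (S_V V) s ->
  twirl s A = \sum_x (adj (V *m xbasis x) *m A *m (V *m xbasis x)) 0 0 *:
                 (Zx x *m proj_V V *m adj (Zx x)).
Proof.
move=> /twirl_S_V->; rewrite X_twirlE mulmx_sumr mulmx_suml; apply: eq_bigr => x _.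
rewrite -scalemxAr -scalemxAl; congr (_ 0 0 *: _); first by rewrite !adjM !mulmxA.
have Vxbasis : V *m xbasis x = Zx x *m ket_V V.
  by rewrite /xbasis /ket_V !mulmxA Zx_comm_diag.
by rewrite /proj_V !mulmx_rank1 Vxbasis.
Qed.

End ConjugatedTranslations.

End Qubits.

Arguments xbasis {R l} x.

Theorem proposition5 (R : realType) (l : nat) (V : 'M[R[i]]_(2 ^ l)) :
  is_diag_mx V -> clifford_level 3 V ->
  (exists s, enumerates (S_V V) s) /\
  forall (s : seq 'M[R[i]]_(2 ^ l)), enumerates (S_V V) s ->
  forall E : 'M[R[i]]_(2 ^ l) -> 'M[R[i]]_(2 ^ l), quantum_channel E ->
  exists p : {ffun {ffun 'I_l -> bool} -> R},
    [/\ forall x, 0 <= p x, \sum_x p x = 1 &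
        twirl s (E (proj_V V)) =
        \sum_x real_complex R (p x) *: (Zx x *m proj_V V *m adj (Zx x))].
Proof.
move=> diagV [unitaryV _]; split; first by eexists; apply: S_V_enum.
move=> s enum_s E chE; have [_ _ trE] := chE.
pose q x := (adj (V *m xbasis x) *m E (proj_V V) *m (V *m xbasis x)) 0 0.
have q_ge0 x : 0 <= q x.
  by have [_ psdE] := channel_psd chE (psd_rank1 (ket_V V)); apply: psdE.
have qE x : real_complex R (complex.Re (q x)) = q x by rewrite RRe_real ?ger0_real.
exists [ffun x => complex.Re (q x)]; split.
- by move=> x; rewrite ffunE -ler0c qE.
- apply: complexI; rewrite rmorph_sum rmorph1 /=.
  under eq_bigr do rewrite ffunE qE.
  by rewrite sum_Vxbasis_quad // trE tr_proj_V.
- rewrite (twirl_S_V_diag unitaryV diagV _ enum_s); apply: eq_bigr => x _.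
  by rewrite ffunE qE.
Qed.
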